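(* Let $\mathbb{A}=\mathbb{A}_f\times\mathbf{R}$ be the adeles of $\mathbf{Q}$, $Y_\mathbf{Q}=\mathbf{Q}^\times\backslash\mathbb{A}$ and $C_\mathbf{Q}=\mathbf{Q}^\times\backslash\mathbb{A}^\times\subset Y_\mathbf{Q}$. For $a\in\mathbb{A}$ put $L_a=\{q\in\mathbf{Q}\mid qa_f\in\widehat{\mathbf{Z}}\}$. Let $\mathcal F_\eta\subset Y_\mathbf{Q}$ be the set of classes $[a]$ with $a_\infty\neq0$ and $L_a\cong\mathbf{Z}$ as abelian groups. Then $\mathcal F_\eta$ is exactly the set of idele classes, so that $\mathcal F_\eta\cong C_\mathbf{Q}$ canonically. *)

From mathcomp Require Import all_boot all_order all_algebra.
From mathcomp Require Import reals.
Set Implicit Arguments. Unset Strict Implicit. Unset Printing Implicit Defensive.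
Import Order.TTheory GRing.Theory Num.Theory.
Local Open Scope ring_scope.

(* Profinite integers  Zhat = lim_n Z/nZ.  An element is represented by a    *)
(* function z : nat -> int, where z n is a representative of the component   *)
(* in Z/(n+1)Z; compatibility: for (n+1) | (m+1), z m = z n mod (n+1).       *)
Definition zhat_elt (z : nat -> int) : Prop :=
  forall n m : nat, (n.+1 %| m.+1)%N -> (z m = z n %[mod (n.+1)%:Z])%Z.

Definition zhat_eq (z w : nat -> int) : Prop :=
  forall n : nat, (z n = w n %[mod (n.+1)%:Z])%Z.

(* An adele a = (a_f, a_oo) in A = A_f x R, with A_f = Q (x) Zhat, is        *)
(* represented as a_f = fin_num / fin_den (fin_num in Zhat, fin_den > 0) and *)
(* a_oo = arch.  Every adele has such a representation.                      *)
Record adele (R : realType) := Adele {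
  fin_num : nat -> int;
  fin_den : nat;
  arch : R }.

Definition wf_adele (R : realType) (a : adele R) : Prop :=
  zhat_elt (fin_num a) /\ (0 < fin_den a)%N.

(* equality of adeles: z/d = z'/d' in A_f iff d' z = d z' in Zhat *)
Definition adele_eq (R : realType) (a b : adele R) : Prop :=
  zhat_eq (fun n => (fin_den b)%:Z * fin_num a n)
          (fun n => (fin_den a)%:Z * fin_num b n)
  /\ arch a = arch b.

Definition scale (R : realType) (q : rat) (a : adele R) : adele R :=
  Adele (fun n => numq q * fin_num a n) (absz (denq q) * fin_den a)%N
        (ratr q * arch a).

Definition same_class (R : realType) (a b : adele R) : Prop :=
  exists q : rat, q != 0 /\ adele_eq (scale q a) b.

Definition in_zhat_frac (x : nat -> int) (d : nat) : Prop :=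
  exists w : nat -> int, zhat_elt w /\
    zhat_eq x (fun n => d%:Z * w n).

Definition L_a (R : realType) (a : adele R) (q : rat) : Prop :=
  in_zhat_frac (fun n => numq q * fin_num a n) (absz (denq q) * fin_den a)%N.

Definition iso_to_Z (L : rat -> Prop) : Prop :=
  exists f : int -> rat,
    (forall k l : int, f (k + l) = f k + f l) /\ injective f /\
    (forall q : rat, L q <-> exists k : int, f k = q).

Definition in_Feta (R : realType) (a : adele R) : Prop :=
  arch a != 0 /\ iso_to_Z (L_a a).

(* ideles: units of the ring A = A_f x R *)
Definition is_idele (R : realType) (a : adele R) : Prop :=
  arch a != 0 /\
  exists b : adele R, wf_adele b /\
    zhat_eq (fun n => fin_num a n * fin_num b n)
            (fun n => (fin_den a * fin_den b)%:Z).

(* Write the finite part of b as x/d with x in Zhat.  Then q = m/k lies in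
   L_b iff kd divides the residue of m x modulo kd.  If b is an idele with
   inverse y/e, multiplying by y shows q e in Z for every q in L_b, so L_b
   is a subgroup of (1/e)Z containing d, hence infinite cyclic.  Conversely,
   if L_b = gZ then w := g x/d lies in Zhat and is a unit: a prime p dividing
   w would put g/p in L_b.  The inverse of b is then built from g and w^-1. *)

From mathcomp Require Import all_boot all_order all_algebra.
From mathcomp Require Import reals boolp ring.
Set Implicit Arguments. Unset Strict Implicit. Unset Printing Implicit Defensive.
Import Order.TTheory GRing.Theory Num.Theory.
Local Open Scope ring_scope.

Lemma dvdz_eq_mod (d a b : int) : (a = b %[mod d])%Z -> (d %| a)%Z = (d %| b)%Z.
Proof. by move=> e; rewrite !(sameP dvdz_mod0P eqP) e. Qed.

Lemma zhat_eltZ (c : int) (z : nat -> int) :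
  zhat_elt z -> zhat_elt (fun n => c * z n).
Proof. by move=> hz n m nm; rewrite -modzMmr (hz n m nm) modzMmr. Qed.

Lemma zhat_elt_dvd (y : nat -> int) (k m : nat) : zhat_elt y ->
  (0 < m)%N -> (k %| m)%N -> (k%:Z %| y m.-1)%Z = (k%:Z %| y k.-1)%Z.
Proof.
move=> hy m0 km; have k0 : (0 < k)%N := dvdn_gt0 m0 km.
by apply: dvdz_eq_mod; have := hy k.-1 m.-1; rewrite !prednK //; apply.
Qed.

Lemma zhat_elt_dvdZ (y : nat -> int) (c k : nat) : zhat_elt y ->
  (0 < c)%N -> (0 < k)%N ->
  ((c * k)%:Z %| c%:Z * y (c * k).-1)%Z = (k%:Z %| y k.-1)%Z.
Proof.
move=> hy c0 k0; rewrite PoszM dvdz_mul2l ?eqz_nat -?lt0n //.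
by rewrite zhat_elt_dvd ?muln_gt0 ?c0 // dvdn_mull.
Qed.

Lemma in_zhat_fracP (y : nat -> int) (k : nat) : zhat_elt y -> (0 < k)%N ->
  in_zhat_frac y k <-> (k%:Z %| y k.-1)%Z.
Proof.
move=> hy k0; split=> [[w [_ /(_ k.-1)]]|yk].
  by rewrite prednK // => /dvdz_eq_mod->; rewrite dvdz_mulr.
have ykn n : (k%:Z %| y (k * n.+1).-1)%Z.
  by rewrite zhat_elt_dvd ?muln_gt0 ?k0 ?dvdn_mulr.
exists (fun n => (y (k * n.+1).-1 %/ k%:Z)%Z); split=> [n m nm|n].
  apply/eqP; rewrite eqz_mod_dvd -(@dvdz_mul2l k%:Z) ?eqz_nat -?lt0n //.
  rewrite -PoszM mulrBr ![k%:Z * _]mulrC !divzK // -eqz_mod_dvd.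
  apply/eqP; have := hy (k * n.+1).-1 (k * m.+1).-1.
  by rewrite !prednK ?muln_gt0 ?k0 //; apply; rewrite dvdn_mul.
rewrite mulrC divzK //; apply/esym/hy.
by rewrite prednK ?muln_gt0 ?k0 // dvdn_mull.
Qed.

Lemma zhat_elt_coprime (w : nat -> int) : zhat_elt w ->
  (forall p, prime p -> ~~ (p%:Z %| w p.-1)%Z) ->
  forall n, coprimez (w n) n.+1.
Proof.
move=> hw noP n; apply: contraT => ncop.
have g1 : (1 < gcdn `|w n| n.+1)%N.
  by rewrite ltn_neqAle gcdn_gt0 orbT andbT eq_sym; rewrite coprimezE in ncop.
have p_pr := pdiv_prime g1; set p := pdiv _ in p_pr.
have [pw pn] : (p %| `|w n|)%N /\ (p %| n.+1)%N.
  by split; apply: dvdn_trans (pdiv_dvd _) _; rewrite ?dvdn_gcdl ?dvdn_gcdr.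
by move: (noP p p_pr); rewrite -(@zhat_elt_dvd w p n.+1) // => /negP.
Qed.

Lemma zhat_elt_inv (w : nat -> int) : zhat_elt w ->
  (forall n, coprimez (w n) n.+1) ->
  exists2 u, zhat_elt u & zhat_eq (fun n => u n * w n) (fun=> 1).
Proof.
move=> hw cop; pose u n := (egcdz (w n) n.+1).1.
have hu n : (n.+1%:Z %| u n * w n - 1)%Z.
  rewrite /u; case: egcdzP => un vn /= e _; rewrite (eqP (cop n)) in e.
  by rewrite -e opprD addNKr rpredN dvdz_mull.
exists u => [n m nm|n]; apply/eqP; rewrite eqz_mod_dvd ?hu //.
have hum : (n.+1%:Z %| u m * w m - 1)%Z by apply: dvdz_trans (hu m).
have hwm : (n.+1%:Z %| w m - w n)%Z by rewrite -eqz_mod_dvd; apply/eqP/hw.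
have -> : u m - u n = u n * (u m * w m - 1) - u m * (u n * w n - 1)
                      - u m * u n * (w m - w n) by ring.
by rewrite !rpredB ?dvdz_mull.
Qed.

Lemma in_zhat_frac_trans (y w : nat -> int) (k p : nat) :
  zhat_eq y (fun n => k%:Z * w n) -> in_zhat_frac w p -> in_zhat_frac y (k * p).
Proof.
move=> hy [w' [hw' hw]]; exists w'; split=> // n.
by rewrite hy PoszM -mulrA -modzMmr hw modzMmr.
Qed.

Lemma additive_intE (f : int -> rat) : (forall k l, f (k + l) = f k + f l) ->
  forall k, f k = k%:~R * f 1.
Proof.
move=> fD.
have f0 : f 0 = 0 by apply: (addrI (f 0)); rewrite -fD !addr0.
have fn (n : nat) : f n = n%:R * f 1.
  by elim: n => [|n IH]; rewrite ?f0 ?mul0r // -addn1 PoszD fD IH natrD mulrDl mul1r.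
case=> n; first exact: fn.
apply/eqP; rewrite -(can_eq (addKr (f n.+1))) -fD NegzE addrN f0 fn.
by rewrite rmorphN mulNr addrN.
Qed.

Lemma intr_eq_invn (k : int) (p : nat) : (0 < p)%N ->
  (k%:~R : rat) = p%:R^-1 -> p = 1%N.
Proof.
move=> p0 e; have : (k * p%:Z)%:~R = 1%:~R :> rat.
  by rewrite rmorphM rmorph1 /= e mulVf // pnatr_eq0 -lt0n.
move/intr_inj/(congr1 absz); rewrite abszM absz_nat => /eqP.
by rewrite muln_eq1 => /andP[_ /eqP].
Qed.

Lemma iso_to_Z_subgroup (L : rat -> Prop) (e : nat) : (0 < e)%N ->
  (forall q1 q2, L q1 -> L q2 -> L (q1 + q2)) ->
  (forall (t : int) q, L q -> L (t%:~R * q)) ->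
  (forall q, L q -> exists j : int, q = j%:~R / e%:R) ->
  (exists2 q, 0 < q & L q) -> iso_to_Z L.
Proof.
move=> e0 LD LZ Le [q q0 Lq].
have eR : (e%:R : rat) != 0 by rewrite pnatr_eq0 -lt0n.
have ex_n : exists n, `[< (0 < n)%N /\ L (n%:R / e%:R) >].
  have [j qE] := Le q Lq; exists `|j|%N; apply/asboolP.
  have j0 : 0 < j by move: q0; rewrite qE pmulr_lgt0 ?invr_gt0 ?ltr0n // ltr0z.
  by rewrite absz_gt0 gt_eqF //= -[_%:R]/((`|j|%N%:Z)%:~R) gtz0_abs // -qE.
case: (ex_minnP ex_n) => n0 /asboolP [n00 Ln0] n0_min; pose g : rat := n0%:R / e%:R.
have g0 : g != 0 by rewrite mulf_neq0 ?invr_eq0 // pnatr_eq0 -lt0n.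
exists (fun k : int => k%:~R * g); split; first by move=> k l; rewrite rmorphD mulrDl.
split=> [k l /(mulIf g0)/intr_inj //|q']; split=> [Lq'|[k <-]]; last exact: LZ.
have [j q'E] := Le q' Lq'.
have n0Z : n0%:Z != 0 by rewrite eqz_nat -lt0n.
set t := (j %/ n0)%Z; set r := (j %% n0)%Z.
have jE : j = t * n0 + r := divz_eq j n0.
have [r0 rn0] : 0 <= r /\ r < n0 by split; [exact: modz_ge0 | exact: ltz_mod].
exists t; have Lr : L (r%:~R / e%:R).
  have -> : r%:~R / e%:R = q' + (- t)%:~R * g.
    by rewrite q'E jE /g; field.
  by apply: LD => //; apply: LZ.
suff r_eq0 : r = 0 by rewrite q'E jE r_eq0 addr0 /g; field.
apply: contraTeq rn0 => rn0; rewrite -leNgt -(gez0_abs r0) lez_nat n0_min //.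
apply/asboolP; split; first by rewrite absz_gt0.
by rewrite -[_%:R]/((`|r|%N%:Z)%:~R) gez0_abs.
Qed.

Lemma rat_natden (q : rat) :
  exists2 mk : int * nat, (0 < mk.2)%N & q = mk.1%:~R / mk.2%:R.
Proof.
exists (numq q, `|denq q|%N); first by rewrite absz_gt0 denq_neq0.
by rewrite /= -[_%:R]/((`|denq q|%N%:Z)%:~R) absz_denq divq_num_den.
Qed.

Section LatticeOfAdele.

Variables (R : realType) (a : adele R).
Hypothesis wf_a : wf_adele a.
Local Notation x := (fin_num a).
Local Notation d := (fin_den a).

Lemma L_aP (m : int) (k : nat) : (0 < k)%N ->
  L_a a (m%:~R / k%:R) <-> ((k * d)%:Z %| m * x (k * d).-1)%Z.
Proof.
case: wf_a => hx d0 k0; set q := _ / _; set N := numq q; set D := `|denq q|%N.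
have D0 : (0 < D)%N by rewrite absz_gt0 denq_neq0.
have cross : D%:Z * m = k%:Z * N.
  apply: (@intr_inj rat); rewrite !rmorphM /= /N numqE /D absz_denq /q.
  by field; rewrite pnatr_eq0 -lt0n.
have [hNx hmx] := (zhat_eltZ N hx, zhat_eltZ m hx).
rewrite /L_a in_zhat_fracP -/N -/D ?muln_gt0 ?D0 //.
rewrite -(zhat_elt_dvdZ hNx k0) ?muln_gt0 ?D0 //.
rewrite -(zhat_elt_dvdZ hmx D0) ?muln_gt0 ?k0 //=.
by rewrite mulnCA !mulrA cross.
Qed.

Lemma L_a_frac (m : int) (k : nat) : (0 < k)%N ->
  L_a a (m%:~R / k%:R) <-> in_zhat_frac (fun n => m * x n) (k * d).
Proof.
case: wf_a => hx d0 k0.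
by rewrite L_aP // (in_zhat_fracP (zhat_eltZ m hx)) // muln_gt0 k0.
Qed.

Lemma L_aD (q1 q2 : rat) : L_a a q1 -> L_a a q2 -> L_a a (q1 + q2).
Proof.
have [[m1 k1] /= k10 ->] := rat_natden q1; have [[m2 k2] /= k20 ->] := rat_natden q2.
have [k1R k2R] : (k1%:R : rat) != 0 /\ (k2%:R : rat) != 0.
  by rewrite !pnatr_eq0 -!lt0n.
have k0 : (0 < k1 * k2)%N by rewrite muln_gt0 k10.
rewrite (_ : _ + _ = (m1 * k2%:Z + m2 * k1%:Z)%:~R / (k1 * k2)%:R); last first.
  by field; rewrite k1R k2R.
rewrite (_ : m1%:~R / k1%:R = (m1 * k2%:Z)%:~R / (k1 * k2)%:R :> rat); last first.
  by field; rewrite k1R k2R.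
rewrite (_ : m2%:~R / k2%:R = (m2 * k1%:Z)%:~R / (k1 * k2)%:R :> rat); last first.
  by field; rewrite k1R k2R.
by rewrite !L_aP // mulrDl; apply: rpredD.
Qed.

Lemma L_aMz (t : int) (q : rat) : L_a a q -> L_a a (t%:~R * q).
Proof.
have [[m k] /= k0 ->] := rat_natden q.
rewrite (_ : t%:~R * _ = (t * m)%:~R / k%:R :> rat); last by rewrite intrM mulrA.
by rewrite !L_aP // -mulrA; apply: dvdz_mull.
Qed.

Lemma L_a_den : L_a a d%:R.
Proof.
have -> : (d%:R : rat) = (d%:Z)%:~R / 1%:R by rewrite divr1.
by rewrite L_aP // mul1n dvdz_mulr.
Qed.

Lemma L_a_divn (m : int) (k p : nat) (w : nat -> int) : (0 < k)%N -> (0 < p)%N ->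
  zhat_eq (fun n => m * x n) (fun n => (k * d)%:Z * w n) ->
  zhat_elt w -> (p%:Z %| w p.-1)%Z -> L_a a (m%:~R / (k * p)%:R).
Proof.
move=> k0 p0 hmx hw pw; rewrite L_a_frac ?muln_gt0 ?k0 // mulnAC.
by apply: in_zhat_frac_trans hmx _; rewrite in_zhat_fracP.
Qed.

Lemma L_a_idele_den (c : adele R) : wf_adele c ->
  zhat_eq (fun n => x n * fin_num c n) (fun n => (d * fin_den c)%:Z) ->
  forall q, L_a a q -> exists j : int, q = j%:~R / (fin_den c)%:R.
Proof.
case: wf_a => _ d0 [_ e0] hxy q; have [[m k] /= k0 ->] := rat_natden q.
rewrite L_aP // => hk; set e := fin_den c in hxy *; set K := (k * d)%N in hk.
have K0 : (0 < K)%N by rewrite muln_gt0 k0.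
have hc := hxy K.-1; rewrite prednK // mulnC in hc.
have : (K%:Z %| m * e%:Z * d%:Z)%Z.
  rewrite -mulrA -PoszM.
  rewrite -(dvdz_eq_mod (_ : m * (x K.-1 * fin_num c K.-1) = _ %[mod K])%Z).
    by rewrite mulrA dvdz_mulr.
  by rewrite -modzMmr hc modzMmr.
rewrite PoszM dvdz_mul2r ?eqz_nat -?lt0n // => /divzK me.
have [kR eR] : (k%:R : rat) != 0 /\ (e%:R : rat) != 0 by rewrite !pnatr_eq0 -!lt0n.
exists ((m * e%:Z) %/ k%:Z)%Z; apply: (mulIf kR).
by rewrite mulfVK // mulrAC -[k%:R]/((k%:Z)%:~R) -intrM me intrM mulfK.
Qed.

Lemma is_idele_zhat_unit (m : int) (k : nat) (w u : nat -> int) :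
  arch a != 0 -> (0 < k)%N -> zhat_elt u ->
  zhat_eq (fun n => m * x n) (fun n => k%:Z * w n) ->
  zhat_eq (fun n => u n * w n) (fun=> 1) -> is_idele a.
Proof.
move=> ha k0 hu hmx huw; split=> //.
exists (Adele (fun n => m * d%:Z * u n) k 0).
split; first by split=> //; apply: zhat_eltZ.
move=> n /=; have -> : x n * (m * d%:Z * u n) = d%:Z * u n * (m * x n) by ring.
rewrite -modzMmr hmx modzMmr.
have -> : d%:Z * u n * (k%:Z * w n) = (d * k)%N%:Z * (u n * w n) by rewrite PoszM; ring.
by rewrite -modzMmr huw modzMmr mulr1.
Qed.

Lemma in_Feta_is_idele : in_Feta a -> is_idele a.
Proof.
case=> ha [f [fD [finj fL]]].
have fE := additive_intE fD; set g := f 1.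
have g0 : g != 0.
  by apply: (contra_neq _ (oner_neq0 int)) => g0; apply: finj; rewrite (fE 0) mul0r.
have [[m k] /= k0 gE] := rat_natden g.
have [w [hw hmx]] : in_zhat_frac (fun n => m * x n) (k * d).
  by rewrite -L_a_frac // -gE; apply/fL; exists 1.
have noP p : prime p -> ~~ (p%:Z %| w p.-1)%Z.
  move=> p_pr; apply/negP => pw; have p0 := prime_gt0 p_pr.
  have /fL [t] : L_a a (g / p%:R).
    by rewrite gE -mulrA -invfM -natrM; apply: L_a_divn hmx hw pw.
  rewrite fE -/g (mulrC g) => /(mulIf g0)/(intr_eq_invn p0) p1.
  by move: (prime_gt1 p_pr); rewrite p1.
have [u hu huw] := zhat_elt_inv hw (zhat_elt_coprime hw noP).
by apply: is_idele_zhat_unit ha _ hu hmx huw; rewrite muln_gt0 k0 wf_a.2.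
Qed.

Lemma is_idele_in_Feta : is_idele a -> in_Feta a.
Proof.
case: wf_a => _ d0 [ha [c [wc hxc]]]; split=> //.
apply: (iso_to_Z_subgroup wc.2) => [q1 q2|t q||]; first exact: L_aD.
- exact: L_aMz.
- exact: L_a_idele_den wc hxc.
- by exists d%:R; [rewrite ltr0n | exact: L_a_den].
Qed.

Lemma in_Feta_idele : in_Feta a <-> is_idele a.
Proof. by split=> [/in_Feta_is_idele | /is_idele_in_Feta]. Qed.

End LatticeOfAdele.

Theorem theorem7p9 (R : realType) (a : adele R) :
  wf_adele a ->
  ((exists b : adele R, wf_adele b /\ same_class a b /\ in_Feta b) <->
   (exists b : adele R, wf_adele b /\ same_class a b /\ is_idele b)).
Proof.
by move=> _; split=> -[b [wb [ab /(in_Feta_idele wb) hb]]]; exists b.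
Qed.
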